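(* Let $q\ge2$ be a prime power, $d\ge6$ and $5\le j\le d$. Then $|Q_j(d-4)|>|Q_j(d-3)|$.
   Context: Let $b=-q$. For integers $m\ge0$ and $l$, ${m\brack l}_b=\prod_{t=1}^{l}\frac{b^{m-t+1}-1}{b^t-1}$ for $l\ge0$ and $0$ for $l<0$. For $0\le i,j\le d$, $$Q_j(i)=\sum_{h=0}^{\min\{j,d-i\}}(-1)^j(-q)^{\binom{j-h}{2}+hd}{d-h\brack d-j}_b{d-i\brack h}_b,$$ the eigenvalues of the Hermitian forms graph $Q_q(d,j)$. *)

From mathcomp Require Import all_boot all_order all_algebra.
Set Implicit Arguments. Unset Strict Implicit. Unset Printing Implicit Defensive.
Import Order.TTheory GRing.Theory Num.Theory.
Local Open Scope ring_scope.

(* For t > m+1 the exponent is truncated, but then the factor t = m+1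
   (b^0 - 1 = 0) already makes the product 0, as in the paper. *)
Definition gbin (b : rat) (m l : nat) : rat :=
  \prod_(1 <= t < l.+1) ((b ^+ (m.+1 - t)%N - 1) / (b ^+ t - 1)).

(* Q_j(i) for the Hermitian forms graph, with b = -q. *)
Definition Qeig (q d j i : nat) : rat :=
  let b : rat := - (q%:R) in
  \sum_(0 <= h < (minn j (d - i)).+1)
    (-1) ^+ j * b ^+ ('C(j - h, 2) + h * d)%N
      * gbin b (d - h) (d - j) * gbin b (d - i) h.

Set Warnings "-notation-overridden,-ambiguous-paths".
From mathcomp Require Import all_boot all_order all_algebra.
From mathcomp Require Import ring lra zify.
Import Order.TTheory GRing.Theory Num.Theory.
Local Open Scope ring_scope.

(* Write Q = q >= 2, b = -Q and i = d - n.  For n <= j the eigenvalue is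
     Q_j(d - n) = sum_{h=0}^{n} W_h [n brack h]_b,
     W_h = (-1)^j b^(C(j-h,2) + hd) [d-h brack d-j]_b,
   where the weights W_h do not depend on n.  The absorption identity for
   Gaussian binomials gives W_h (b^(j-h) - 1) b^(d-j+h+1) = W_(h+1) (b^(d-h) - 1),
   and as j - h >= 2 and d - h >= 3 for h < 4 this forces the fast growth
     Q^(h+1) |W_h| <= 3/2 |W_(h+1)|        (h = 0, 1, 2, 3).
   Hence W_4 dominates: with the explicit Gaussian binomials [3 brack h]_b
   and [4 brack h]_b, the triangle inequality bounds |Q_j(d-3)| from above
   and |Q_j(d-4)| from below, and the difference of the two bounds is
   |W_4| minus a combination of |W_0|, ..., |W_3| which the growth estimate
   and a one-variable polynomial inequality in Q show to be positive. *)

Lemma gbin0 (b : rat) m : gbin b m 0 = 1.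
Proof. by rewrite /gbin big_geq. Qed.

Lemma gbin_absorb (b : rat) m l :
  gbin b m.+1 l * (b ^+ (m.+1 - l) - 1) = gbin b m l * (b ^+ m.+1 - 1).
Proof.
elim: l => [|l IHl]; first by rewrite !gbin0 subn0.
rewrite /gbin big_nat_recr // [in RHS]big_nat_recr //= -/(gbin b m.+1 l) -/(gbin b m l).
rewrite !subSS; transitivity
  (gbin b m.+1 l * (b ^+ (m.+1 - l) - 1) * ((b ^+ (m - l) - 1) / (b ^+ l.+1 - 1))).
  by ring.
by rewrite IHl; ring.
Qed.

Section NegativeBase.

Variable Q : rat.
Hypothesis Q_ge2 : 2 <= Q.

Let Q_ge0 : 0 <= Q. Proof. by move: Q_ge2; lra. Qed.

Lemma exp2_le_expQ m n : (m <= n)%N -> 2 ^+ m <= Q ^+ n.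
Proof.
move=> le_mn; apply: le_trans (ler_weXn2l _ le_mn) _; first lra.
by apply: lerXn2r; rewrite ?nnegrE //; lra.
Qed.

Lemma norm_expN n : `|(- Q) ^+ n| = Q ^+ n.
Proof. by rewrite normrX normrN ger0_norm. Qed.

Lemma expN_sub1_neq0 n : (0 < n)%N -> (- Q) ^+ n - 1 != 0.
Proof.
move=> n_gt0; rewrite subr_eq0; apply/eqP => /(congr1 Num.norm).
rewrite norm_expN normr1 => Qn1.
by have := @exp2_le_expQ 1 n n_gt0; rewrite expr1 Qn1; lra.
Qed.

Lemma gbin_neq0 m l : (l <= m)%N -> gbin (- Q) m l != 0.
Proof.
move=> le_lm; rewrite /gbin prodf_seq_neq0; apply/allP => t.
rewrite mem_index_iota => /andP [t_gt0 t_le] /=.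
by rewrite mulf_neq0 ?invr_neq0 // expN_sub1_neq0 //; lia.
Qed.

(* The case n = 1, in the form it takes after simplification. *)
Lemma negQ_sub1_neq0 : - Q - 1 != 0.
Proof. by have := @expN_sub1_neq0 1 isT; rewrite expr1. Qed.

Ltac gbin_value :=
  rewrite /gbin unlock /=; field;
  repeat (apply/andP; split);
  first [ exact: negQ_sub1_neq0 | by apply: expN_sub1_neq0 ].

Lemma gbin31 : gbin (- Q) 3 1 = Q ^+ 2 - Q + 1. Proof. gbin_value. Qed.
Lemma gbin32 : gbin (- Q) 3 2 = Q ^+ 2 - Q + 1. Proof. gbin_value. Qed.
Lemma gbin33 : gbin (- Q) 3 3 = 1. Proof. gbin_value. Qed.
Lemma gbin41 : gbin (- Q) 4 1 = - ((Q - 1) * (Q ^+ 2 + 1)). Proof. gbin_value. Qed.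
Lemma gbin42 : gbin (- Q) 4 2 = (Q ^+ 2 + 1) * (Q ^+ 2 - Q + 1). Proof. gbin_value. Qed.
Lemma gbin43 : gbin (- Q) 4 3 = - ((Q - 1) * (Q ^+ 2 + 1)). Proof. gbin_value. Qed.
Lemma gbin44 : gbin (- Q) 4 4 = 1. Proof. gbin_value. Qed.

(* From a step relation w (R - 1) S = w' (P - 1) with |S| |R| = |P| Q^k and
   |P| >= 8, |R| >= 4, the ratio |w'| / |w| is at least 2/3 Q^k, because
   |R - 1| >= 3/4 |R| and |P - 1| <= 9/8 |P|. *)
Lemma growth_from_step (w w' R P S : rat) (k : nat) :
  w * (R - 1) * S = w' * (P - 1) -> `|S| * `|R| = `|P| * Q ^+ k ->
  8 <= `|P| -> 4 <= `|R| -> Q ^+ k * `|w| <= 3/2 * `|w'|.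
Proof.
move=> /(congr1 Num.norm) step normSR P_ge8 R_ge4.
rewrite !normrM in step.
have R1_ge : 3/4 * `|R| <= `|R - 1|.
  by have := lerB_dist R 1; rewrite normr1; lra.
have P1_le : `|P - 1| <= 9/8 * `|P|.
  by have := ler_normB P 1; rewrite normr1; lra.
have wS_ge0 : 0 <= `|w| * `|S| by rewrite mulr_ge0.
have scaled : `|P| * (3/4 * (Q ^+ k * `|w|)) <= `|P| * (9/8 * `|w'|).
  have -> : `|P| * (3/4 * (Q ^+ k * `|w|)) = `|w| * `|S| * (3/4 * `|R|).
    transitivity (3/4 * `|w| * (`|P| * Q ^+ k)); first by ring.
    by rewrite -normSR; ring.
  apply: le_trans (ler_wpM2l wS_ge0 R1_ge) _.
  have -> : `|w| * `|S| * `|R - 1| = `|w'| * `|P - 1| by rewrite -step; ring.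
  by apply: le_trans (ler_wpM2l (normr_ge0 w') P1_le) _; lra.
by rewrite ler_pM2l in scaled; lra.
Qed.

(* The polynomial inequality behind the final comparison; after Q = t + 2
   every coefficient of the difference is nonnegative. *)
Lemma dominant_poly :
  3/2 * Q ^+ 7 * (Q ^+ 2 - Q + 1) + 9/4 * (Q ^+ 2 - Q + 1) * (Q ^+ 2 + 2) * Q ^+ 3
    + 27/8 * Q ^+ 4 + 81/8 < Q ^+ 10.
Proof.
have t_ge0 : 0 <= Q - 2 by move: Q_ge2; lra.
set t := Q - 2 in t_ge0; have -> : Q = t + 2 by rewrite /t; ring.
have := exprn_ge0 2 t_ge0; have := exprn_ge0 3 t_ge0; have := exprn_ge0 4 t_ge0.
have := exprn_ge0 5 t_ge0; have := exprn_ge0 6 t_ge0; have := exprn_ge0 7 t_ge0.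
have := exprn_ge0 8 t_ge0; have := exprn_ge0 9 t_ge0; have := exprn_ge0 10 t_ge0.
lra.
Qed.

Lemma dominant_term (w0 w1 w2 w3 w4 : rat) :
  0 <= w0 -> 0 <= w1 -> 0 <= w2 -> 0 <= w3 -> 0 < w4 ->
  Q ^+ 1 * w0 <= 3/2 * w1 -> Q ^+ 2 * w1 <= 3/2 * w2 ->
  Q ^+ 3 * w2 <= 3/2 * w3 -> Q ^+ 4 * w3 <= 3/2 * w4 ->
  2 * w0 + Q ^+ 3 * w1 + (Q ^+ 2 - Q + 1) * (Q ^+ 2 + 2) * w2
    + Q * (Q ^+ 2 - Q + 1) * w3 < w4.
Proof.
move=> w0_ge0 w1_ge0 w2_ge0 w3_ge0 w4_gt0 r0 r1 r2 r3.
have lift k (x y : rat) : x <= y -> Q ^+ k * x <= Q ^+ k * y.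
  by move=> le_xy; rewrite ler_wpM2l ?exprn_ge0.
have v2 : Q ^+ 7 * w2 <= 9/4 * w4.
  by have := lift 4%N _ _ r2; rewrite mulrA -exprD; nra.
have v1 : Q ^+ 9 * w1 <= 27/8 * w4.
  by have := lift 7%N _ _ r1; rewrite mulrA -exprD; nra.
have v0 : Q ^+ 10 * w0 <= 81/16 * w4.
  by have := lift 9%N _ _ r0; rewrite mulrA -exprD; nra.
have a_ge0 : 0 <= Q ^+ 2 - Q + 1 by nra.
have k3 := ler_wpM2l (mulr_ge0 (exprn_ge0 7 Q_ge0) a_ge0) r3.
have k2 := ler_wpM2l (mulr_ge0 (mulr_ge0 a_ge0 (addr_ge0 (exprn_ge0 2 Q_ge0)
  (ler0n _ 2))) (exprn_ge0 3 Q_ge0)) v2.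
have k1 := ler_wpM2l (exprn_ge0 4 Q_ge0) v1.
have := dominant_poly; rewrite -(ltr_pM2r w4_gt0) => poly_w4.
have Q10_gt0 : 0 < Q ^+ 10 by rewrite exprn_gt0 //; move: Q_ge2; lra.
rewrite -(ltr_pM2l Q10_gt0).
have -> : Q ^+ 10 * (2 * w0 + Q ^+ 3 * w1 + (Q ^+ 2 - Q + 1) * (Q ^+ 2 + 2) * w2
    + Q * (Q ^+ 2 - Q + 1) * w3)
  = 2 * (Q ^+ 10 * w0) + Q ^+ 4 * (Q ^+ 9 * w1)
    + (Q ^+ 2 - Q + 1) * (Q ^+ 2 + 2) * Q ^+ 3 * (Q ^+ 7 * w2)
    + Q ^+ 7 * (Q ^+ 2 - Q + 1) * (Q ^+ 4 * w3) by ring.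
lra.
Qed.

End NegativeBase.

Section HermitianWeights.

Variables q d j : nat.

Let Q : rat := q%:R.
Let b : rat := - Q.

Definition weight (h : nat) : rat :=
  (-1) ^+ j * b ^+ ('C(j - h, 2) + h * d) * gbin b (d - h) (d - j).
(* Expanding sums by simplification must keep the weights folded. *)
Arguments weight : simpl never.

Lemma Qeig_expand i n : (d - i = n)%N -> (n <= j)%N ->
  Qeig q d j i = \sum_(0 <= h < n.+1) weight h * gbin b n h.
Proof. by move=> <- le_nj; rewrite /Qeig (minn_idPr le_nj). Qed.

Lemma weight_step h : (h < j)%N -> (j <= d)%N ->
  weight h * (b ^+ (j - h) - 1) * b ^+ (d - j + h + 1)
  = weight h.+1 * (b ^+ (d - h) - 1).
Proof.
move=> lt_hj le_jd; rewrite /weight.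
have := gbin_absorb b (d - h.+1) (d - j).
have -> : (d - h.+1).+1 = (d - h)%N by lia.
have -> : ((d - h) - (d - j) = j - h)%N by lia.
move=> absorb.
have -> : ('C(j - h.+1, 2) + h.+1 * d
           = 'C(j - h, 2) + h * d + (d - j + h + 1))%N.
  have -> : (j - h = (j - h.+1).+1)%N by lia.
  by rewrite binS bin1; lia.
rewrite [in RHS]exprD; transitivity ((-1) ^+ j * b ^+ ('C(j - h, 2) + h * d)
  * b ^+ (d - j + h + 1) * (gbin b (d - h) (d - j) * (b ^+ (j - h) - 1))).
  by ring.
by rewrite absorb; ring.
Qed.

Hypotheses (q_ge2 : (2 <= q)%N) (d_ge6 : (6 <= d)%N).
Hypotheses (j_ge5 : (5 <= j)%N) (j_le_d : (j <= d)%N).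

Let Q_ge2 : 2 <= Q. Proof. by rewrite (ler_nat _ 2 q). Qed.
Let norm_bX n : `|b ^+ n| = Q ^+ n. Proof. exact: norm_expN. Qed.

Lemma weight_growth h : (h < 4)%N ->
  Q ^+ h.+1 * `|weight h| <= 3/2 * `|weight h.+1|.
Proof.
move=> lt_h4; have lt_hj : (h < j)%N by lia.
apply: (@growth_from_step Q _ _ _ _ _ _ (weight_step h lt_hj j_le_d)).
- by rewrite !norm_bX -!exprD; congr (_ ^+ _); lia.
- rewrite norm_bX.
  by have := @exp2_le_expQ Q Q_ge2 3 (d - h) ltac:(lia); lra.
- rewrite norm_bX.
  by have := @exp2_le_expQ Q Q_ge2 2 (j - h) ltac:(lia); lra.
Qed.

(* The dominant weight W_4 is nonzero since d - j <= d - 4. *)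
Lemma weight4_neq0 : weight 4 != 0.
Proof.
rewrite /weight !mulf_neq0 ?expf_neq0 ?oppr_eq0 ?oner_eq0 //.
- by rewrite pnatr_eq0 -lt0n; lia.
- by apply: (@gbin_neq0 Q) => //; lia.
Qed.

Lemma Qeig_d3_upper :
  `|Qeig q d j (d - 3)| <= `|weight 0| + (Q ^+ 2 - Q + 1) * `|weight 1|
    + (Q ^+ 2 - Q + 1) * `|weight 2| + `|weight 3|.
Proof.
rewrite (@Qeig_expand _ 3) ?subKn //; try lia.
apply: le_trans (ler_norm_sum _ _ _) _.
rewrite unlock /= !(normrM (weight _)) gbin0 gbin31 // gbin32 // gbin33 //.
have a_ge0 : 0 <= Q ^+ 2 - Q + 1 by nra.
by rewrite normr1 (ger0_norm a_ge0); lra.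
Qed.

Lemma Qeig_d4_lower :
  `|weight 4| - (`|weight 0| + (Q - 1) * (Q ^+ 2 + 1) * `|weight 1|
    + (Q ^+ 2 + 1) * (Q ^+ 2 - Q + 1) * `|weight 2|
    + (Q - 1) * (Q ^+ 2 + 1) * `|weight 3|) <= `|Qeig q d j (d - 4)|.
Proof.
rewrite (@Qeig_expand _ 4) ?subKn //; try lia.
rewrite big_nat_recr //= gbin44 // mulr1 addrC.
apply: le_trans (lerB_normD _ _); rewrite lerD2l lerN2.
apply: le_trans (ler_norm_sum _ _ _) _.
rewrite unlock /= !(normrM (weight _)) gbin0 gbin41 // gbin42 // gbin43 //.
have e_ge0 : 0 <= (Q - 1) * (Q ^+ 2 + 1) by apply: mulr_ge0; move: Q_ge2; nra.
have f_ge0 : 0 <= (Q ^+ 2 + 1) * (Q ^+ 2 - Q + 1) by apply: mulr_ge0; move: Q_ge2; nra.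
by rewrite normr1 !normrN (ger0_norm e_ge0) (ger0_norm f_ge0); lra.
Qed.

End HermitianWeights.

Theorem lemma5p9 (q d j : nat) :
  (exists p k : nat, [/\ prime p, (0 < k)%N & q = (p ^ k)%N]) ->
  (2 <= q)%N -> (6 <= d)%N -> (5 <= j)%N -> (j <= d)%N ->
  `|Qeig q d j (d - 3)| < `|Qeig q d j (d - 4)|.
Proof.
move=> _ q_ge2 d_ge6 j_ge5 j_le_d.
have Q_ge2 : 2 <= (q%:R : rat) by rewrite (ler_nat _ 2 q).
have growth := weight_growth _ _ _ q_ge2 d_ge6 j_ge5 j_le_d.
have W4_gt0 : 0 < `|weight q d j 4|.
  by rewrite normr_gt0 (weight4_neq0 _ _ _ q_ge2 d_ge6 j_ge5 j_le_d).
have := dominant_term _ Q_ge2 _ _ _ _ _ (normr_ge0 _) (normr_ge0 _)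
  (normr_ge0 _) (normr_ge0 _) W4_gt0 (growth 0%N isT) (growth 1%N isT)
  (growth 2%N isT) (growth 3%N isT).
have := Qeig_d3_upper _ _ _ q_ge2 d_ge6 j_ge5 j_le_d.
have := Qeig_d4_lower _ _ _ q_ge2 d_ge6 j_ge5 j_le_d.
lra.
Qed.
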